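(* Let $G$ be a connected bipartite circulant graph and let $n\ge 1$. Then $K_{n,n} \otimes G$ is a circulant graph.
   Context: Graphs have no multiple edges but may have loops. The tensor product $G \otimes H$ of graphs $G$ and $H$ has vertex set $V(G)\times V(H)$, with $(g,h)$ adjacent to $(g',h')$ if and only if $g$ is adjacent to $g'$ in $G$ and $h$ is adjacent to $h'$ in $H$. $K_{n,n}$ denotes the complete bipartite graph with both parts of size $n$. For an integer $N\ge 1$ and a set $S$ of integers, the circulant graph $C_NS$ has vertex set $\{0,1,\dots,N-1\}$, with $i$ adjacent to $j$ if and only if $i-j \equiv \pm s \pmod N$ for some $s\in S$. A graph is circulant if it is isomorphic to some $C_NS$ (this includes disconnected graphs); equivalently, if it has an automorphism that permutes all its vertices in a single cycle. *)

(* Finite graphs: a finType of vertices with a symmetric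
   boolean adjacency relation (loops allowed, no multiple edges). *)
From mathcomp Require Import all_boot all_order all_algebra.
Set Implicit Arguments. Unset Strict Implicit. Unset Printing Implicit Defensive.
Import GRing.Theory Num.Theory.

Definition is_graph (T : finType) (e : rel T) : Prop := symmetric e.

Definition connected_graph (T : finType) (e : rel T) : Prop :=
  0 < #|T| /\ forall x y : T, connect e x y.

Definition bipartite (T : finType) (e : rel T) : Prop :=
  exists c : T -> bool, forall x y : T, e x y -> c x != c y.

Definition circ_adj (N : nat) (S : int -> Prop) (i j : nat) : Prop :=
  exists s : int, S s /\
    ((((i%:Z - j%:Z) %% N%:Z)%Z = (s %% N%:Z)%Z) \/
     (((i%:Z - j%:Z) %% N%:Z)%Z = ((- s) %% N%:Z)%Z)).

Definition circulant (T : finType) (e : rel T) : Prop :=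
  exists (N : nat) (S : int -> Prop) (f : T -> 'I_N),
    0 < N /\ bijective f /\
    forall x y : T, e x y <-> circ_adj N S (f x) (f y).

(* K_{n,n}: vertex set bool * 'I_n (side, index); edges between the two sides. *)
Definition Knn (n : nat) : rel (bool * 'I_n) := fun x y => x.1 != y.1.
Arguments Knn n : clear implicits.

Definition tensor (T1 T2 : finType) (e1 : rel T1) (e2 : rel T2) : rel (T1 * T2) :=
  fun x y => e1 x.1 y.1 && e2 x.2 y.2.

From mathcomp Require Import all_boot all_order all_algebra.
From mathcomp Require Import zify.
Set Implicit Arguments. Unset Strict Implicit. Unset Printing Implicit Defensive.
Import GRing.Theory Num.Theory.

(* Let c be a proper 2-colouring of G and f : G -> Z_N a circulant labelling
   with connection set S.  A vertex (b, k, x) of K_{n,n} (x) G is labelled by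
   the mixed-radix number 2 (k N + f x) + (b xor c x) < 2nN.  Along an edge
   of the tensor product both b and c x flip, so the parity digit is preserved
   and the differences of labels are exactly the even numbers 2 (s + m N)
   with s in S: the product is the circulant C_{2nN} {2 (s + m N)}. *)

Section IntCongruence.

Local Open Scope ring_scope.

Lemma eqz_modP (d a b : int) :
  reflect (exists q : int, a - b = q * d) (a == b %[mod d])%Z.
Proof. by rewrite eqz_mod_dvd; apply: dvdzP. Qed.

Lemma eqz_mod_double (M a b u : int) (r r' : bool) :
  (2 * a + r%:Z - (2 * b + r'%:Z) == 2 * u %[mod 2 * M])%Z
  = (r == r') && (a - b == u %[mod M])%Z.
Proof.
apply/eqz_modP/andP => [[q Hq] | [/eqP <- /eqz_modP [q Hq]]]; last first.
  by exists q; lia.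
have rr' : r = r'.
  by move: Hq; case: r; case: r' => //= Hq; exfalso; lia.
by subst r'; split=> //; apply/eqz_modP; exists q; lia.
Qed.

Lemma eqz_mod_lift (n N d s : int) :
  (exists m : int, (d == s + m * N %[mod n * N])%Z) <-> (d == s %[mod N])%Z.
Proof.
split=> [[m /eqz_modP [q Hq]] | /eqz_modP [q Hq]].
  by apply/eqz_modP; exists (q * n + m); nia.
by exists q; apply/eqz_modP; exists 0; lia.
Qed.

End IntCongruence.

Definition double_lift (N : nat) (S : int -> Prop) (t : int) : Prop :=
  exists s m : int, S s /\ t = (2 * (s + m * N%:Z))%R.

Section DigitCode.

Variables n N : nat.

Local Open Scope int_scope.

Lemma digit_code_subproof (u : bool * 'I_n * 'I_N) :
  2 * (u.1.2 * N + u.2) + u.1.1 < 2 * n * N.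
Proof.
case: u => [[r k] i] /=.
have : k.+1 * N <= n * N by rewrite leq_mul2r ltn_ord orbT.
by have := ltn_ord i; have := leq_b1 r; rewrite mulSn; lia.
Qed.

Definition digit_code (u : bool * 'I_n * 'I_N) : 'I_(2 * n * N) :=
  Ordinal (digit_code_subproof u).

Lemma digit_code_bij : bijective digit_code.
Proof.
apply: inj_card_bij; last by rewrite !card_prod card_bool !card_ord.
move=> [[r k] i] [[r' k'] i'] /(congr1 val) /= E.
have := ltn_ord i; have := ltn_ord i'; have := leq_b1 r; have := leq_b1 r'.
move=> hr' hr hi' hi.
have Er : r = r' :> nat by lia.
have Ek : k = k' :> nat by nia.
have Ei : i = i' :> nat by nia.
by rewrite (val_inj Ek) (val_inj Ei); move: Er; clear; case: r r' => [] [].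
Qed.

Lemma circ_adj_digit_code (S : int -> Prop) (u v : bool * 'I_n * 'I_N) :
  circ_adj (2 * n * N) (double_lift N S) (digit_code u) (digit_code v)
  <-> u.1.1 = v.1.1 /\ circ_adj N S u.2 v.2.
Proof.
case: u v => [[r k] i] [[r' k'] i'] /=.
set D : int := ((k * N + i)%:Z - (k' * N + i')%:Z)%R.
have codeE w : ((2 * (k * N + i) + r)%:Z - (2 * (k' * N + i') + r')%:Z
                  == 2 * w %[mod (2 * n * N)%:Z])%Z
               = (r == r') && (D == w %[mod n%:Z * N%:Z])%Z.
  by rewrite -eqz_mod_double -mulnA !PoszD !PoszM.
have DE s : (D == s %[mod N])%Z = (i%:Z - i'%:Z == s %[mod N])%Z.
  have -> : D = ((k%:Z - k'%:Z) * N + (i%:Z - i'%:Z))%R.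
    by rewrite /D !PoszD !PoszM; lia.
  by rewrite modzMDl.
split.
- move=> [_ [[s [m [Ss ->]]] H]].
  have flip : (- (2 * (s + m * N)) = 2 * (- s + (- m) * N))%R by lia.
  case: H => /eqP; [| rewrite flip]; rewrite codeE => /andP [/eqP Er Hm];
    split=> //; exists s; split=> //.
  + by left; apply/eqP; rewrite -DE -(eqz_mod_lift n); exists m.
  + by right; apply/eqP; rewrite -DE -(eqz_mod_lift n); exists (- m)%R.
- move=> [Er [s [Ss H]]].
  case: H => /eqP H.
  + have [m Hm] : exists m : int, (D == s + m * N %[mod n%:Z * N%:Z])%Z.
      by apply/eqz_mod_lift; rewrite DE.
    exists (2 * (s + m * N))%R; split; first by exists s, m.
    by left; apply/eqP; rewrite codeE Er eqxx.
  + have [m Hm] : exists m : int, (D == (- s)%R + m * N %[mod n%:Z * N%:Z])%Z.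
      by apply/eqz_mod_lift; rewrite DE.
    exists (2 * (s + (- m) * N))%R; split; first by exists s, (- m)%R.
    have flip : (- (2 * (s + (- m) * N)) = 2 * (- s + m * N))%R by lia.
    by right; apply/eqP; rewrite flip codeE Er eqxx.
Qed.

End DigitCode.

Lemma tensor_Knn_colour (T : finType) (e : rel T) (c : T -> bool) (n : nat) :
  (forall x y, e x y -> c x != c y) ->
  forall u v : bool * 'I_n * T,
  tensor (Knn n) e u v = (u.1.1 (+) c u.2 == v.1.1 (+) c v.2) && e u.2 v.2.
Proof.
move=> proper [[b k] x] [[b' k'] y]; rewrite /tensor /Knn /=.
case exy: (e x y); rewrite ?andbF ?andbT //.
by move: (proper _ _ exy); case: b b' (c x) (c y) => [] [] [] [].
Qed.

Section Recolour.

Variables (T : finType) (c : T -> bool) (n N : nat) (f : T -> 'I_N).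

Definition recolour (u : bool * 'I_n * T) : bool * 'I_n * 'I_N :=
  (u.1.1 (+) c u.2, u.1.2, f u.2).

Lemma recolour_bij : bijective f -> bijective recolour.
Proof.
move=> [g fK gK].
exists (fun w => (w.1.1 (+) c (g w.2), w.1.2, g w.2)).
  by case=> [[b k] x]; rewrite /recolour /= fK addbK.
by case=> [[b k] i]; rewrite /recolour /= gK addbK.
Qed.

End Recolour.

Theorem theorem7 (T : finType) (e : rel T) (n : nat) :
  is_graph e -> connected_graph e -> bipartite e -> circulant e ->
  0 < n -> circulant (tensor (Knn n) e).
Proof.
move=> _ _ [c proper] [N [S [f [N_gt0 [f_bij f_adj]]]]] n_gt0.
exists (2 * n * N), (double_lift N S), (@digit_code n N \o recolour c f).
split; first by rewrite !muln_gt0 n_gt0 N_gt0.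
split; first exact: bij_comp (digit_code_bij _ _) (recolour_bij c _ f_bij).
move=> u v; rewrite (tensor_Knn_colour proper) circ_adj_digit_code /= -f_adj.
by split=> [/andP [/eqP] | [/eqP ->]].
Qed.
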